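(* Let $\mathfrak{A}[\tau]$ be a semi-associative topological partial *-algebra with multiplication core $\mathfrak{B}$ and unit $e\in\mathfrak{B}$, and let $\mathcal{M}\subseteq\mathcal{P}_{\mathfrak{B}}(\mathfrak{A})$ be sufficient. Take $\mathfrak{K}=\mathfrak{A}^+_{\mathcal{M}}$. Then $\|x\|_b:=\inf\{\gamma>0:-\gamma e\le x\le\gamma e\}$ is a norm on the real vector space $(\mathfrak{A}_b(\mathcal{M}))_h$ of hermitian $\mathfrak{K}$-bounded elements.
   Context: A partial *-algebra is a complex vector space $\mathfrak{A}$ with conjugate-linear involution and distributive partial multiplication on $\Gamma\subset\mathfrak{A}\times\mathfrak{A}$ with $(x,y)\in\Gamma$ iff $(y^*,x^* )\in\Gamma$, then $(xy)^*=y^*x^*$; $L(y)=\{x:(x,y)\in\Gamma\}$, $R(x)=\{y:(x,y)\in\Gamma\}$; $R\mathfrak{A}$, $L\mathfrak{A}$ universal right/left multipliers; unit $e=e^*\in R\mathfrak{A}\cap L\mathfrak{A}$ with $xe=ex=x$. Semi-associative: $y\in R(x)$ implies $yz\in R(x)$ and $(xy)z=x(yz)$ for $z\in R\mathfrak{A}$. Topological partial *-algebra: Hausdorff locally convex topology $\tau$ such that each map $y\in R(x)\mapsto xy$ is closed. $\tau^*$: seminorms $\max\{p(x),p(x^* )\}$. A multiplication core is a subspace $\mathfrak{B}\subseteq R\mathfrak{A}$ with: $e\in\mathfrak{B}$ if a unit exists; $\mathfrak{B}\mathfrak{B}\subseteq\mathfrak{B}$; $\mathfrak{B}$ $\tau^*$-dense;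 $x\mapsto xb$ $\tau$-continuous for $b\in\mathfrak{B}$; $b^*(xc)=(b^*x)c$. An ips-form with core $\mathfrak{B}$ is a positive sesquilinear form $\varphi$ on $\mathfrak{A}\times\mathfrak{A}$ with $\mathfrak{B}\subset R\mathfrak{A}$, $\{x+N_\varphi:x\in\mathfrak{B}\}$ dense in the completion of $\mathfrak{A}/N_\varphi$ ($N_\varphi=\{x:\varphi(x,x)=0\}$), $\varphi(xa,b)=\varphi(a,x^*b)$ and $\varphi(x^*a,yb)=\varphi(a,(xy)b)$ for $x\in L(y)$, $a,b\in\mathfrak{B}$. $\mathcal{P}_{\mathfrak{B}}(\mathfrak{A})$: such forms that are $\tau$-continuous. $\mathcal{M}$ is sufficient if $\varphi(x,x)=0$ for all $\varphi\in\mathcal{M}$ implies $x=0$. $\mathfrak{A}^+_{\mathcal{M}}=\{x:\varphi(xa,a)\ge0\ \forall\varphi\in\mathcal{M},a\in\mathfrak{B}\}$; it defines the order $x\le y\iff y-x\in\mathfrak{A}^+_{\mathcal{M}}$ on $\mathfrak{A}_h=\{x:x=x^*\}$. With $\Re(x)=\frac12(x+x^* )$, $\Im(x)=\frac1{2i}(x-x^* )$, an element $x$ is $\mathfrak{K}$-bounded if there is $\gamma\ge0$ with $\pm\Re(x)\le\gamma e$ and $\pm\Im(x)\le\gamma e$; $\mathfrak{A}_b(\mathcal{M})$ denotes the set of such elements for $\mathfrak{K}=\mathfrak{A}^+_{\mathcal{M}}$ and $(\mathfrak{A}_b(\mathcal{M}))_h$ its hermitian part. *)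

From HB Require Import structures.
From mathcomp Require Import all_boot all_order all_algebra.
From mathcomp Require Import all_classical all_reals all_analysis.
From mathcomp Require Import complex.
Import Order.TTheory GRing.Theory Num.Theory.
Import numFieldTopology.Exports.
Set Implicit Arguments.
Unset Strict Implicit.
Unset Printing Implicit Defensive.
Local Open Scope classical_set_scope.
Local Open Scope ring_scope.
Local Open Scope complex_scope.

(* The locally convex
   Hausdorff topology tau of the partial *-algebra is the topology of a
   (locally convex) tvsType over R[i], together with hausdorff_space.
   A partial *-algebra is given by
     star : A -> A        (the involution)
     G    : A -> A -> Prop (the set Gamma of composable pairs: G x y <-> (x,y) in Gamma)
     mul  : A -> A -> A    (the product; its value is only meaningful on G). *)

(* the complex numbers, as a numClosedFieldType so that they carry their
   usual (modulus) topology *)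
Definition Cplx (R : realType) : numClosedFieldType := R[i].

Section PartialStarAlgebra.
Variable R : realType.
Variable A : tvsType R[i].
Variable star : A -> A.
Variable G : A -> A -> Prop.
Variable mul : A -> A -> A.

Definition Lmul (y : A) : set A := [set x | G x y].
Definition Rmul (x : A) : set A := [set y | G x y].
Definition RA : set A := [set y | forall x, G x y].
Definition LA : set A := [set x | forall y, G x y].

Definition is_partial_star_algebra : Prop :=
  (forall x, star (star x) = x) /\
  (forall (l : Cplx R) x y, star (l *: x + y) = (l^*)%R *: star x + star y) /\
  (forall x y, G x y -> G (star y) (star x)) /\
  (forall (l : Cplx R) x y1 y2, G x y1 -> G x y2 ->
      G x (l *: y1 + y2) /\ mul x (l *: y1 + y2) = l *: mul x y1 + mul x y2) /\
  (forall (l : Cplx R) x1 x2 y, G x1 y -> G x2 y ->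
      G (l *: x1 + x2) y /\ mul (l *: x1 + x2) y = l *: mul x1 y + mul x2 y) /\
  (forall x y, G x y -> star (mul x y) = mul (star y) (star x)).

Definition is_unit (e : A) : Prop :=
  e = star e /\ RA e /\ LA e /\ (forall x, mul x e = x /\ mul e x = x).

Definition semi_associative : Prop :=
  forall x y z, G x y -> RA z -> G x (mul y z) /\ mul (mul x y) z = mul x (mul y z).

(* topological partial *-algebra: Hausdorff (locally convex by tvsType) and
   every map y \in R(x) |-> xy is closed (has closed graph). *)
Definition is_topological : Prop :=
  hausdorff_space A /\
  (forall x, closed [set p : A * A | G x p.1 /\ p.2 = mul x p.1]).

(* density for tau^*, the topology generated by the seminorms
   max{p(x), p(x^* )}, i.e. the initial topology of id and star *)
Definition tau_star_dense (B : set A) : Prop :=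
  forall x (U V : set A), nbhs x U -> nbhs (star x) V ->
    exists b, B b /\ U b /\ V (star b).

Definition multiplication_core (e : A) (B : set A) : Prop :=
  B 0 /\ (forall (l : Cplx R) b c, B b -> B c -> B (l *: b + c)) /\
  B `<=` RA /\
  B e /\
  (forall b c, B b -> B c -> B (mul b c)) /\
  tau_star_dense B /\
  (forall b, B b -> continuous (fun x => mul x b)) /\
  (forall b c x, B b -> B c -> mul (star b) (mul x c) = mul (mul (star b) x) c).

Definition positive_sesquilinear (phi : A -> A -> Cplx R) : Prop :=
  (forall (l : Cplx R) x y z, phi (l *: x + y) z = l * phi x z + phi y z) /\
  (forall (l : Cplx R) x y z, phi x (l *: y + z) = (l^*)%R * phi x y + phi x z) /\
  (forall x, 0 <= phi x x).

(* ips-form with core B.  Density of {b + N_phi : b in B} in the completion of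
   A/N_phi is written out as density in the phi-seminorm. *)
Definition ips_form (B : set A) (phi : A -> A -> Cplx R) : Prop :=
  positive_sesquilinear phi /\
  B `<=` RA /\
  (forall x (eps : R), 0 < eps -> exists b, B b /\ phi (x - b) (x - b) < eps%:C) /\
  (forall x a b, B a -> B b -> phi (mul x a) b = phi a (mul (star x) b)) /\
  (forall x y a b, G x y -> B a -> B b ->
      phi (mul (star x) a) (mul y b) = phi a (mul (mul x y) b)).

Definition P_B (B : set A) : set (A -> A -> Cplx R) :=
  [set phi | ips_form B phi /\ continuous (fun p : A * A => phi p.1 p.2)].

Definition sufficient (M : set (A -> A -> Cplx R)) : Prop :=
  forall x, (forall phi, M phi -> phi x x = 0) -> x = 0.

Definition Aplus (B : set A) (M : set (A -> A -> Cplx R)) : set A :=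
  [set x | forall phi a, M phi -> B a -> 0 <= phi (mul x a) a].

Definition leK (B : set A) (M : set (A -> A -> Cplx R)) (x y : A) : Prop :=
  Aplus B M (y - x).

Definition ReA (x : A) : A := (2%:R)^-1 *: (x + star x).
Definition ImA (x : A) : A := (2%:R * 'i)^-1 *: (x - star x).

Definition Kbounded (B : set A) (M : set (A -> A -> Cplx R)) (e x : A) : Prop :=
  exists gamma : R, 0 <= gamma /\
    leK B M (ReA x) (gamma%:C *: e) /\ leK B M (- ReA x) (gamma%:C *: e) /\
    leK B M (ImA x) (gamma%:C *: e) /\ leK B M (- ImA x) (gamma%:C *: e).

Definition Ab_h (B : set A) (M : set (A -> A -> Cplx R)) (e : A) : set A :=
  [set x | x = star x /\ Kbounded B M e x].

Definition normb (B : set A) (M : set (A -> A -> Cplx R)) (e x : A) : R :=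
  inf [set gamma : R | 0 < gamma /\
        leK B M (- (gamma%:C *: e)) x /\ leK B M x (gamma%:C *: e)].

End PartialStarAlgebra.

From Pilot Require Import Defs.
From HB Require Import structures.
From mathcomp Require Import all_boot all_order all_algebra.
From mathcomp Require Import all_classical all_reals all_analysis.
From mathcomp Require Import complex.
From mathcomp Require Import lra.
Import Order.TTheory GRing.Theory Num.Theory.
Local Open Scope classical_set_scope.
Local Open Scope ring_scope.
Local Open Scope complex_scope.
Set Implicit Arguments.
Unset Strict Implicit.
Unset Printing Implicit Defensive.

(* The hermitian K-bounded elements form a real subspace and the order-unit
   gauge  x |-> inf {g > 0 : -g e <= x <= g e}  is a seminorm on it for a
   purely order-theoretic reason: A^+_M is a convex cone containing e.
   Definiteness is where the forms of M enter.  If ||x||_b = 0, then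
   -g phi(a,a) <= phi(xa,a) <= g phi(a,a) for arbitrarily small g > 0, so
   phi(xa,a) = 0 for all a in B.  Polarizing with a = l b + e (B is a subspace
   containing e) gives phi(xb,e) = 0 and phi(x,b) = 0; since x is hermitian,
   phi(b,x) = phi(xb,e) = 0 as well.  As B is dense for the phi-seminorm,
   phi(x,x) <= phi(x-b,x-b) is arbitrarily small, and sufficiency of M forces
   x = 0. *)

Section ComplexOrder.
Variable R : realType.
Implicit Types z w u v : Cplx R.

(* [conjc_real] restated for [Num.conj], the conjugation used in [Defs]. *)
Lemma conjC_real (r : R) : ((r%:C : Cplx R)^*)%R = r%:C.
Proof. exact: conjc_real. Qed.

Lemma ge0C_lt_eq0 z :
  0 <= z -> (forall eps : R, 0 < eps -> z < eps%:C) -> z = 0.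
Proof.
case: z => zr zi; rewrite lecE /= => /andP[/eqP zi0 zr_ge0] z_small.
rewrite zi0; congr (_ +i* _); apply/eqP; rewrite eq_le zr_ge0 andbT.
rewrite leNgt; apply/negP => zr_gt0.
by have := z_small _ zr_gt0; rewrite ltcE /= ltxx andbF.
Qed.

Lemma sandwichC_eq0 z w : 0 <= w ->
  (forall eps : R, 0 < eps -> 0 <= z + eps%:C * w /\ 0 <= eps%:C * w - z) ->
  z = 0.
Proof.
case: z w => zr zi [wr wi]; rewrite lecE /= => /andP[/eqP wi0 wr_ge0] zw_small.
have zw_small' eps : 0 < eps -> zi = 0 /\ `|zr| <= eps * wr.
  move=> /zw_small[]; rewrite !lecE /= wi0 !(mulr0, mul0r, addr0, add0r, subr0).
  move=> /andP[/eqP zi0 h1] /andP[_ h2]; split => //.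
  by rewrite ler_norml; apply/andP; split; lra.
have [zi0 _] := zw_small' 1 ltr01; rewrite zi0; congr (_ +i* _).
apply/normr0_eq0/le_anti; rewrite normr_ge0 andbT.
apply/ler_addgt0Pr => y y_gt0; rewrite add0r.
have [wr0|wr_neq0] := eqVneq wr 0.
  have [_] := zw_small' 1 ltr01; rewrite wr0 mulr0 => /le_trans-> //.
  exact: ltW.
have wr_gt0 : 0 < wr by rewrite lt_neqAle eq_sym wr_neq0.
by have [_] := zw_small' _ (divr_gt0 y_gt0 wr_gt0); rewrite divfK.
Qed.

Lemma conj_comb_eq0 u v : (forall l : Cplx R, l * u + (l^*)%R * v = 0) ->
  u = 0 /\ v = 0.
Proof.
move=> comb; have /eqP := comb 1; rewrite conjC1 !mul1r addr_eq0 => /eqP u_eq.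
have := comb 'i%R; rewrite conjCi {}u_eq mulrN mulNr -opprD => /eqP.
rewrite oppr_eq0 -mulr2n mulrn_eq0 /= mulf_eq0 (negbTE (neq0Ci _)) /= => /eqP->.
by rewrite oppr0.
Qed.
End ComplexOrder.

Section Sesquilinear.
Variables (R : realType) (A : tvsType R[i]) (phi : A -> A -> Cplx R).
Hypothesis phi_sesq : positive_sesquilinear phi.

Lemma sesq_ge0 x : 0 <= phi x x.
Proof. by case: phi_sesq => [_ [_]]. Qed.

Lemma sesqDZl (l : Cplx R) x y z : phi (l *: x + y) z = l * phi x z + phi y z.
Proof. by case: phi_sesq. Qed.

Lemma sesqDZr (l : Cplx R) x y z :
  phi x (l *: y + z) = (l^*)%R * phi x y + phi x z.
Proof. by case: phi_sesq => [_ []]. Qed.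

Lemma sesq0l z : phi 0 z = 0.
Proof.
have := sesqDZl 1 0 0 z; rewrite scale1r addr0 mul1r.
by rewrite -{1}[phi 0 z]addr0 => /addrI.
Qed.

Lemma sesq0r z : phi z 0 = 0.
Proof.
have := sesqDZr 1 z 0 0; rewrite scale1r addr0 conjC1 mul1r.
by rewrite -{1}[phi z 0]addr0 => /addrI.
Qed.

Lemma sesqZl (l : Cplx R) x z : phi (l *: x) z = l * phi x z.
Proof. by have := sesqDZl l x 0 z; rewrite addr0 sesq0l addr0. Qed.

Lemma sesqZr (l : Cplx R) x z : phi x (l *: z) = (l^*)%R * phi x z.
Proof. by have := sesqDZr l x z 0; rewrite addr0 sesq0r addr0. Qed.

Lemma sesqDl x y z : phi (x + y) z = phi x z + phi y z.
Proof. by have := sesqDZl 1 x y z; rewrite scale1r mul1r. Qed.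

Lemma sesqDr x y z : phi z (x + y) = phi z x + phi z y.
Proof. by have := sesqDZr 1 z x y; rewrite scale1r conjC1 mul1r. Qed.

Lemma sesqNl x z : phi (- x) z = - phi x z.
Proof. by rewrite -scaleN1r sesqZl mulN1r. Qed.

Lemma sesqNr x z : phi z (- x) = - phi z x.
Proof. by rewrite -scaleN1r sesqZr rmorphN1 mulN1r. Qed.

Lemma sesq_eq0_orth_dense (D : set A) x :
  (forall eps : R, 0 < eps -> exists b, D b /\ phi (x - b) (x - b) < eps%:C) ->
  (forall b, D b -> phi x b = 0 /\ phi b x = 0) ->
  phi x x = 0.
Proof.
move=> D_dense x_orth.
apply: (ge0C_lt_eq0 (sesq_ge0 x)) => eps /D_dense[b [Db]].
have [xb0 bx0] := x_orth b Db.
rewrite sesqDl !sesqDr !sesqNl !sesqNr xb0 bx0 oppr0 addr0 opprK add0r.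
by apply: le_lt_trans; rewrite lerDl sesq_ge0.
Qed.

End Sesquilinear.

Section OrderUnitGauge.
Variables (R : realType) (A : lmodType R[i]) (P : set A) (e : A).
Hypotheses (P_add : forall u v, P u -> P v -> P (u + v))
  (P_scale : forall (c : R) u, 0 <= c -> P u -> P (c%:C *: u))
  (P_unit : P e).

Definition unit_bounded x (g : R) := P (x + g%:C *: e) /\ P (g%:C *: e - x).

Definition unit_gauge x := inf [set g : R | 0 < g /\ unit_bounded x g].

Lemma P_scale_unit (g : R) : 0 <= g -> P (g%:C *: e).
Proof. by move=> g_ge0; exact: P_scale. Qed.

Lemma unit_boundedW x g g' : g <= g' -> unit_bounded x g -> unit_bounded x g'.
Proof.
move=> le_gg' [lo hi]; have dg_ge0 : 0 <= g' - g by rewrite subr_ge0.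
rewrite /unit_bounded; have -> : g'%:C *: e = g%:C *: e + (g' - g)%:C *: e.
  by rewrite -scalerDl -rmorphD addrC subrK.
split; first by rewrite addrA; apply: P_add => //; exact: P_scale_unit.
by rewrite addrAC; apply: P_add => //; exact: P_scale_unit.
Qed.

Lemma unit_boundedD x y g h :
  unit_bounded x g -> unit_bounded y h -> unit_bounded (x + y) (g + h).
Proof.
move=> [lo_x hi_x] [lo_y hi_y]; rewrite /unit_bounded rmorphD scalerDl.
by split; [rewrite addrACA | rewrite opprD addrACA]; exact: P_add.
Qed.

Lemma unit_boundedN x g : unit_bounded x g -> unit_bounded (- x) g.
Proof. by move=> [lo hi]; split; rewrite addrC ?opprK. Qed.

Lemma unit_boundedZ (r : R) x g :
  unit_bounded x g -> unit_bounded (r%:C *: x) (`|r| * g).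
Proof.
wlog r_ge0 : r / 0 <= r => [wlog_r xg|[lo hi]].
  have [r_ge0|r_lt0] := leP 0 r; first exact: wlog_r.
  rewrite -[r]opprK rmorphN scaleNr normrN; apply: unit_boundedN.
  by apply: wlog_r xg; rewrite oppr_ge0 ltW.
rewrite ger0_norm // /unit_bounded rmorphM -scalerA -scalerDr -scalerBr.
by split; exact: P_scale.
Qed.

Lemma unit_bounded0 g : 0 <= g -> unit_bounded 0 g.
Proof.
by move=> g_ge0; rewrite /unit_bounded add0r subr0; split; exact: P_scale_unit.
Qed.

Definition bounded_by_unit x := exists2 g, 0 <= g & unit_bounded x g.

Lemma unit_gauge_set0 x : bounded_by_unit x ->
  [set g : R | 0 < g /\ unit_bounded x g] !=set0.
Proof.
move=> [g g_ge0 xg]; exists (g + 1); split; first by rewrite ltr_wpDl.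
by apply: unit_boundedW xg; rewrite lerDl.
Qed.

Lemma unit_gauge_ge0 x : bounded_by_unit x -> 0 <= unit_gauge x.
Proof. by move=> xb; apply: lb_le_inf (unit_gauge_set0 xb) _ => g [/ltW]. Qed.

Lemma unit_gauge_le x g : 0 < g -> unit_bounded x g -> unit_gauge x <= g.
Proof. by move=> g_gt0 xg; apply: ge_inf; [exists 0 => h [/ltW] | split]. Qed.

Lemma unit_gauge_glb x c : bounded_by_unit x ->
  (forall g, 0 < g -> unit_bounded x g -> c <= g) -> c <= unit_gauge x.
Proof.
by move=> xb c_lb; apply: lb_le_inf (unit_gauge_set0 xb) _ => g []; exact: c_lb.
Qed.

Lemma unit_gauge0 : unit_gauge 0 = 0.
Proof.
apply/le_anti; rewrite unit_gauge_ge0 ?andbT; last first.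
  by exists 0 => //; exact: unit_bounded0.
apply/ler_addgt0Pr => g g_gt0; rewrite add0r.
by apply: unit_gauge_le => //; apply: unit_bounded0; exact: ltW.
Qed.

Lemma bounded_by_unitZ (r : R) x :
  bounded_by_unit x -> bounded_by_unit (r%:C *: x).
Proof.
move=> [g g_ge0 xg]; exists (`|r| * g); first exact: mulr_ge0.
exact: unit_boundedZ.
Qed.

Lemma bounded_by_unitD x y :
  bounded_by_unit x -> bounded_by_unit y -> bounded_by_unit (x + y).
Proof.
move=> [g g_ge0 xg] [h h_ge0 yh]; exists (g + h); first exact: addr_ge0.
exact: unit_boundedD.
Qed.

Lemma unit_gaugeZ_le (r : R) x : r != 0 -> bounded_by_unit x ->
  unit_gauge (r%:C *: x) <= `|r| * unit_gauge x.
Proof.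
move=> r_neq0 xb; have r_gt0 : 0 < `|r| by rewrite normr_gt0.
rewrite -ler_pdivrMl //; apply: unit_gauge_glb => // g g_gt0 xg.
rewrite ler_pdivrMl //; apply: unit_gauge_le; first exact: mulr_gt0.
exact: unit_boundedZ.
Qed.

Lemma unit_gaugeZ (r : R) x : bounded_by_unit x ->
  unit_gauge (r%:C *: x) = `|r| * unit_gauge x.
Proof.
move=> xb; have [->|r_neq0] := eqVneq r 0.
  by rewrite scale0r normr0 mul0r unit_gauge0.
apply/le_anti; rewrite unit_gaugeZ_le //=.
have r_gt0 : 0 < `|r| by rewrite normr_gt0.
have := unit_gaugeZ_le (invr_neq0 r_neq0) (bounded_by_unitZ r xb).
by rewrite scalerA -rmorphM mulVf // scale1r normfV -ler_pdivlMl.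
Qed.

Lemma unit_gaugeD x y : bounded_by_unit x -> bounded_by_unit y ->
  unit_gauge (x + y) <= unit_gauge x + unit_gauge y.
Proof.
move=> xb yb; rewrite -lerBlDl; apply: unit_gauge_glb => // h h_gt0 yh.
rewrite lerBlDl -lerBlDr; apply: unit_gauge_glb => // g g_gt0 xg.
rewrite lerBlDr; apply: unit_gauge_le; first exact: addr_gt0.
exact: unit_boundedD.
Qed.

Lemma unit_gauge_eq0_bounded x : bounded_by_unit x -> unit_gauge x = 0 ->
  forall eps, 0 < eps -> unit_bounded x eps.
Proof.
move=> xb x0 eps eps_gt0; have : unit_gauge x < eps by rewrite x0.
move=> /(inf_lt (unit_gauge_set0 xb))[g [_ xg] /ltW g_le].
exact: unit_boundedW xg.
Qed.

End OrderUnitGauge.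

Section PartialStarAlgebraNorm.
Variables (R : realType) (A : tvsType R[i]) (star : A -> A)
  (G : A -> A -> Prop) (mul : A -> A -> A) (e : A) (B : set A)
  (M : set (A -> A -> Cplx R)).
Hypotheses (A_psa : is_partial_star_algebra star G mul)
  (e_unit : is_unit star G mul e) (B_core : multiplication_core star G mul e B)
  (M_PB : M `<=` P_B star G mul B) (M_sufficient : sufficient M).

Local Notation Aplus := (Aplus mul B M).

Lemma core_unit : B e.
Proof. by case: B_core => [_ [_ [_ [Be _]]]]. Qed.

Lemma core_DZ (l : Cplx R) b c : B b -> B c -> B (l *: b + c).
Proof. by case: B_core => [_ [DZ _]]; exact: DZ. Qed.

Lemma core_RA : B `<=` RA G.
Proof. by case: B_core => [_ [_ [BRA _]]]. Qed.

Lemma pmulDZl (l : Cplx R) x y a :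
  B a -> mul (l *: x + y) a = l *: mul x a + mul y a.
Proof.
move=> /core_RA Ra; case: A_psa => [_ [_ [_ [_ [mulDZl_ _]]]]].
exact: (mulDZl_ l x y a (Ra x) (Ra y)).2.
Qed.

Lemma pmulDZr (l : Cplx R) x b c :
  B b -> B c -> mul x (l *: b + c) = l *: mul x b + mul x c.
Proof.
move=> /core_RA Rb /core_RA Rc; case: A_psa => [_ [_ [_ [mulDZr_ _]]]].
exact: (mulDZr_ l x b c (Rb x) (Rc x)).2.
Qed.

Lemma pmul0l a : B a -> mul 0 a = 0.
Proof.
move=> Ba; have := pmulDZl 1 0 0 Ba; rewrite scale1r addr0 scale1r.
by rewrite -{1}[mul 0 a]addr0 => /addrI.
Qed.

Lemma pmulZl (l : Cplx R) x a : B a -> mul (l *: x) a = l *: mul x a.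
Proof. by move=> Ba; rewrite -[l *: x]addr0 pmulDZl // pmul0l // addr0. Qed.

Lemma pmulDl x y a : B a -> mul (x + y) a = mul x a + mul y a.
Proof. by move=> Ba; rewrite -[x]scale1r pmulDZl // !scale1r. Qed.

Lemma pmulBl x y a : B a -> mul (x - y) a = mul x a - mul y a.
Proof. by move=> Ba; rewrite pmulDl // -scaleN1r pmulZl // scaleN1r. Qed.

Lemma pmul1l x : mul e x = x.
Proof. by case: e_unit => [_ [_ [_ /(_ x)[]]]]. Qed.

Lemma pmul1r x : mul x e = x.
Proof. by case: e_unit => [_ [_ [_ /(_ x) []]]]. Qed.

Lemma star0 : star 0 = 0.
Proof.
case: A_psa => [_ [starDZ _]]; have := starDZ 1 0 0.
by rewrite scale1r addr0 conjC1 scale1r -{1}[star 0]addr0 => /addrI.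
Qed.

Lemma starD x y : star (x + y) = star x + star y.
Proof.
case: A_psa => [_ [starDZ _]].
by have := starDZ 1 x y; rewrite !scale1r conjC1 scale1r.
Qed.

Lemma starZr (r : R) x : star (r%:C *: x) = r%:C *: star x.
Proof.
case: A_psa => [_ [starDZ _]].
by have := starDZ r%:C x 0; rewrite !addr0 star0 addr0 conjC_real.
Qed.

Lemma M_sesq phi : M phi -> positive_sesquilinear phi.
Proof. by move=> /M_PB[[]]. Qed.

Lemma Aplus_add u v : Aplus u -> Aplus v -> Aplus (u + v).
Proof.
move=> Pu Pv phi a Mphi Ba; rewrite pmulDl // sesqDl; last exact: M_sesq.
by apply: addr_ge0; [exact: Pu | exact: Pv].
Qed.

Lemma Aplus_scale (c : R) u : 0 <= c -> Aplus u -> Aplus (c%:C *: u).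
Proof.
move=> c_ge0 Pu phi a Mphi Ba; rewrite pmulZl // sesqZl; last exact: M_sesq.
by apply: mulr_ge0; [rewrite lecR | exact: Pu].
Qed.

Lemma Aplus_unit : Aplus e.
Proof. by move=> phi a /M_sesq phi_sesq Ba; rewrite pmul1l sesq_ge0. Qed.

Lemma normbE x : normb mul B M e x = unit_gauge Aplus e x.
Proof. by congr inf; apply: eq_set => g; rewrite /leK opprK. Qed.

Lemma ReA_herm x : star x = x -> ReA star x = x.
Proof.
move=> sx; rewrite /ReA sx.
have -> : x + x = (2%:R : Cplx R) *: x by rewrite scaler_nat mulr2n.
by rewrite scalerA mulVf ?scale1r // pnatr_eq0.
Qed.

Lemma ImA_herm x : star x = x -> ImA star x = 0.
Proof. by move=> sx; rewrite /ImA sx subrr scaler0. Qed.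

Lemma Kbounded_herm x : star x = x ->
  Kbounded star mul B M e x <-> bounded_by_unit Aplus e x.
Proof.
move=> sx; rewrite /Kbounded ReA_herm // ImA_herm //.
split=> [[g [g_ge0 [hi [lo _]]]]|[g g_ge0 [lo hi]]].
  by exists g => //; split; [move: lo; rewrite /leK opprK addrC | exact: hi].
exists g; split=> //; split; first exact: hi.
split; first by rewrite /leK opprK addrC.
rewrite /leK !oppr0 !addr0.
by split; exact: (P_scale_unit Aplus_scale Aplus_unit).
Qed.

Lemma Ab_hE x :
  Ab_h star mul B M e x <-> star x = x /\ bounded_by_unit Aplus e x.
Proof. by split=> -[sx xb]; split=> //; apply/Kbounded_herm. Qed.

Lemma Aplus_sandwich_form_eq0 x :
  (forall eps, 0 < eps -> unit_bounded Aplus e x eps) ->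
  forall phi, M phi -> forall a, B a -> phi (mul x a) a = 0.
Proof.
move=> x_small phi Mphi a Ba; have phi_sesq := M_sesq Mphi.
apply: (sandwichC_eq0 (sesq_ge0 phi_sesq a)) => eps /x_small[lo hi].
have := lo phi a Mphi Ba; have := hi phi a Mphi Ba.
by rewrite pmulBl // pmulDl // !pmulZl // !pmul1l !sesqDl // sesqNl // !sesqZl.
Qed.

Lemma form_polarization phi x : M phi ->
  (forall a, B a -> phi (mul x a) a = 0) ->
  forall b, B b -> phi (mul x b) e = 0 /\ phi x b = 0.
Proof.
move=> Mphi x_null b Bb; have phi_sesq := M_sesq Mphi.
apply: conj_comb_eq0 => l; have := x_null _ (core_DZ l Bb core_unit).
rewrite (pmulDZr _ _ Bb core_unit) pmul1r sesqDZl // !sesqDZr // x_null //.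
have := x_null _ core_unit; rewrite pmul1r => ->.
by rewrite mulr0 add0r addr0.
Qed.

Lemma herm_normb_eq0 x : star x = x -> bounded_by_unit Aplus e x ->
  normb mul B M e x = 0 -> x = 0.
Proof.
move=> sx xb; rewrite normbE.
move=> /(unit_gauge_eq0_bounded Aplus_add Aplus_scale Aplus_unit xb).
move=> /Aplus_sandwich_form_eq0 x_null; apply: M_sufficient => phi Mphi.
have /M_PB[[phi_sesq [_ [phi_dense [phi_adj _]]]] _] := Mphi.
apply: (sesq_eq0_orth_dense phi_sesq (phi_dense x)) => b Bb.
have [xb_e x_b] := form_polarization Mphi (x_null phi Mphi) Bb.
by split=> //; rewrite -(pmul1r x) -{1}sx -(phi_adj _ _ _ Bb core_unit).
Qed.

End PartialStarAlgebraNorm.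

Theorem lemma5p19 (R : realType) (A : tvsType R[i]) (star : A -> A)
    (G : A -> A -> Prop) (mul : A -> A -> A) (e : A) (B : set A)
    (M : set (A -> A -> Cplx R)) :
  is_partial_star_algebra star G mul ->
  semi_associative G mul ->
  is_topological G mul ->
  is_unit star G mul e ->
  multiplication_core star G mul e B ->
  M `<=` P_B star G mul B ->
  sufficient M ->
  (Ab_h star mul B M e 0 /\
   (forall x y, Ab_h star mul B M e x -> Ab_h star mul B M e y ->
      Ab_h star mul B M e (x + y)) /\
   (forall (r : R) x, Ab_h star mul B M e x -> Ab_h star mul B M e (r%:C *: x))) /\
  (forall x, Ab_h star mul B M e x -> 0 <= normb mul B M e x) /\
  (forall x, Ab_h star mul B M e x -> normb mul B M e x = 0 -> x = 0) /\
  (forall (r : R) x, Ab_h star mul B M e x ->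
      normb mul B M e (r%:C *: x) = `|r| * normb mul B M e x) /\
  (forall x y, Ab_h star mul B M e x -> Ab_h star mul B M e y ->
      normb mul B M e (x + y) <= normb mul B M e x + normb mul B M e y).
Proof.
move=> A_psa _ _ e_unit B_core M_PB M_sufficient.
have P_add := Aplus_add A_psa B_core M_PB.
have P_scale := Aplus_scale A_psa B_core M_PB.
have P_unit := Aplus_unit e_unit M_PB.
have Ab_hP := Ab_hE A_psa e_unit B_core M_PB.
split; [split; [|split] | split; [|split; [|split]]].
- apply/Ab_hP; split; first exact: (star0 A_psa).
  by exists 0 => //; exact: unit_bounded0.
- move=> x y /Ab_hP[sx xb] /Ab_hP[sy yb]; apply/Ab_hP.
  by split; [rewrite (starD A_psa) sx sy | exact: bounded_by_unitD].
- move=> r x /Ab_hP[sx xb]; apply/Ab_hP.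
  by split; [rewrite (starZr A_psa) sx | exact: bounded_by_unitZ].
- by move=> x /Ab_hP[_ xb]; rewrite normbE; exact: unit_gauge_ge0.
- move=> x /Ab_hP[sx xb].
  exact: (herm_normb_eq0 A_psa e_unit B_core M_PB M_sufficient).
- by move=> r x /Ab_hP[_ xb]; rewrite !normbE; exact: unit_gaugeZ.
- by move=> x y /Ab_hP[_ xb] /Ab_hP[_ yb]; rewrite !normbE; exact: unit_gaugeD.
Qed.
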